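(* Every Gauss sequence is an Euler–Gauss sequence. That is, if $(a_n)_{n\ge1}$ is an integer sequence satisfying $\sum_{d\mid n}\mu(d)\,a_{n/d}\equiv 0 \pmod n$ for all $n\ge1$, then $A_n^+\equiv A_n^-\pmod n$ for all $n\ge 1$.
   Context: $\mu$ is the Möbius function. For an integer sequence $(a_n)_{n\ge1}$ and $n\ge1$, $A_n^+=\prod_{d\mid n,\ \mu(d)=1} a_{n/d}$ and $A_n^-=\prod_{d\mid n,\ \mu(d)=-1} a_{n/d}$ (empty products equal $1$). A Gauss sequence is an integer sequence with $\sum_{d\mid n}\mu(d)a_{n/d}\equiv0\pmod n$ for all $n\ge1$; an Euler–Gauss sequence is an integer sequence with $A_n^+\equiv A_n^-\pmod n$ for all $n\ge1$. *)

From mathcomp Require Import all_boot all_order all_algebra.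
Set Implicit Arguments. Unset Strict Implicit. Unset Printing Implicit Defensive.
Import GRing.Theory Num.Theory.
Local Open Scope ring_scope.

Definition squarefree (d : nat) : bool :=
  all (fun p => logn p d <= 1)%N (primes d).

Definition moebius (d : nat) : int :=
  if squarefree d then (-1) ^+ size (primes d) else 0.

(* Sequences a_1, a_2, ... are encoded as a : nat -> int; the value a 0 is
   irrelevant (never used). *)

Definition is_gauss (a : nat -> int) : Prop :=
  forall n : nat, (0 < n)%N ->
    (n%:Z %| \sum_(d <- divisors n) moebius d * a (n %/ d)%N)%Z.

Definition Aplus (a : nat -> int) (n : nat) : int :=
  \prod_(d <- divisors n | moebius d == 1) a (n %/ d)%N.

Definition Aminus (a : nat -> int) (n : nat) : int :=
  \prod_(d <- divisors n | moebius d == -1) a (n %/ d)%N.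

Definition is_euler_gauss (a : nat -> int) : Prop :=
  forall n : nat, (0 < n)%N -> (Aplus a n == Aminus a n %[mod n%:Z])%Z.

From mathcomp Require Import all_boot all_order all_algebra.
Import GRing.Theory Num.Theory.

(* Fix a prime [p] dividing [n], with [p ^ k] the [p]-part of [n]. The Moebius
   function vanishes on multiples of [p^2] and [moebius (p * d) = - moebius d]
   when [p] does not divide [d], so the divisors that matter pair up as [d],
   [p * d] with [p] not dividing [d]. Pairing the Gauss sum this way gives
   [a n = a (n/p) mod p ^ k] by strong induction on [n]. Applied at [n/d], whose
   [p]-part is still [p ^ k], it makes the two factors [a (n/d)], [a (n/(p d))]
   of each pair congruent; they sit on opposite sides of [A_n^+] and [A_n^-],
   so [A_n^+ = A_n^-] modulo every prime-power part of [n]. *)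

Set Implicit Arguments.
Unset Strict Implicit.

Local Open Scope ring_scope.

Lemma moebius1 : moebius 1 = 1.
Proof. by []. Qed.

Lemma moebius_eq0 p d : prime p -> (0 < d)%N -> (p ^ 2 %| d)%N ->
  moebius d = 0.
Proof.
move=> pp d_gt0 p2d; rewrite /moebius /squarefree.
have pd : (p %| d)%N by apply: dvdn_trans p2d; rewrite dvdn_exp.
suff /negbTE-> : ~~ all (fun q => logn q d <= 1)%N (primes d) by [].
apply/allPn; exists p; first by rewrite mem_primes pp d_gt0.
by rewrite -ltnNge -(pfactor_dvdn 2 pp d_gt0).
Qed.

Lemma moebius_primeM p d : prime p -> (0 < d)%N -> ~~ (p %| d)%N ->
  moebius (p * d)%N = - moebius d.
Proof.
move=> pp d_gt0 npd; have p_gt0 := prime_gt0 pp.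
have p_primes : p \notin primes d by rewrite mem_primes pp d_gt0.
have primes_pd : perm_eq (primes (p * d)%N) (p :: primes d).
  apply: uniq_perm; rewrite ?primes_uniq //= ?p_primes ?primes_uniq // => q.
  by rewrite primesM // primes_prime // inE in_cons.
have squarefree_pd : squarefree (p * d)%N = squarefree d.
  rewrite /squarefree (perm_all _ primes_pd) /= lognM // logn_prime // eqxx.
  rewrite logn_coprime ?prime_coprime //; apply: eq_in_all => q q_d.
  have /negbTE q_neq_p : q != p by apply: contraNneq p_primes => <-.
  by rewrite lognM // logn_prime // q_neq_p.
rewrite /moebius squarefree_pd (perm_size primes_pd).
by case: (squarefree d); rewrite ?exprS ?mulN1r ?oppr0.
Qed.

Lemma logn_div_coprime p n d : coprime p d -> (d %| n)%N ->
  logn p (n %/ d) = logn p n.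
Proof. by move=> cpd dn; rewrite logn_div // (logn_coprime cpd) subn0. Qed.

Lemma dvdn_div_coprime p n d : coprime p d -> (d %| n)%N -> (p %| n)%N ->
  (p %| n %/ d)%N.
Proof. by move=> cpd dn pn; rewrite -(Gauss_dvdr _ cpd) mulnC divnK. Qed.

Lemma perm_divisors_prime_mul n p : (0 < n)%N -> prime p -> (p %| n)%N ->
  perm_eq [seq d <- divisors n | p %| d & ~~ (p ^ 2 %| d)]%N
          [seq p * d | d <- divisors n & ~~ (p %| d)]%N.
Proof.
move=> n_gt0 pp pn; have p_gt0 := prime_gt0 pp.
apply: uniq_perm; first by rewrite filter_uniq ?divisors_uniq.
  rewrite map_inj_uniq ?filter_uniq ?divisors_uniq // => x y /eqP.
  by rewrite eqn_pmul2l // => /eqP.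
move=> e; rewrite mem_filter -dvdn_divisors //; apply/idP/mapP.
- case/andP=> /andP[pe np2e] en.
  have e_eq : e = (p * (e %/ p))%N by rewrite mulnC divnK.
  exists (e %/ p)%N => //; rewrite mem_filter -dvdn_divisors //.
  rewrite e_eq expnS expn1 dvdn_pmul2l // in np2e; rewrite np2e /=.
  by apply: dvdn_trans en; rewrite {2}e_eq dvdn_mull.
- case=> d; rewrite mem_filter -dvdn_divisors // => /andP[npd dn] ->.
  rewrite Gauss_dvd ?prime_coprime // pn dn dvdn_mulr //= andbT.
  by rewrite expnS expn1 dvdn_pmul2l.
Qed.

Lemma big_divisors_prime_pair (R : Type) (idx : R) (op : Monoid.com_law idx)
    n p (F : nat -> R) : (0 < n)%N -> prime p -> (p %| n)%N ->
  (forall d, (d %| n)%N -> (p ^ 2 %| d)%N -> F d = idx) ->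
  \big[op/idx]_(d <- divisors n) F d =
  \big[op/idx]_(d <- divisors n | ~~ (p %| d)%N) op (F d) (F (p * d)%N).
Proof.
move=> n_gt0 pp pn F_p2.
rewrite big_split /= (bigID (dvdn p)) /= Monoid.mulmC; congr (op _ _).
rewrite (bigID (dvdn (p ^ 2))) /= big_seq_cond big1 ?Monoid.mul1m; last first.
  by move=> d /andP[dn /andP[_ p2d]]; apply: F_p2 p2d; rewrite dvdn_divisors.
rewrite -big_filter (perm_big _ (perm_divisors_prime_mul n_gt0 pp pn)).
by rewrite big_map big_filter.
Qed.

Lemma eqz_mod_prod (I : Type) (m : int) (r : seq I) (P : pred I) (F G : I -> int) :
  (forall i, P i -> F i = G i %[mod m])%Z ->
  (\prod_(i <- r | P i) F i = \prod_(i <- r | P i) G i %[mod m])%Z.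
Proof.
move=> FG; apply: (big_ind2 (fun x y => x = y %[mod m])%Z) => // x1 x2 y1 y2.
by move=> e1 e2; rewrite -modzMm e1 e2 modzMm.
Qed.

(* As [moebius (p * d) = - moebius d], the factors [a (n/d)] and [a (n/(p d))]
   of each pair fall on opposite sides. *)
Lemma Aplus_Aminus_eqz_mod (a : nat -> int) (m : int) n p :
    (0 < n)%N -> prime p -> (p %| n)%N ->
  (forall d, (d %| n)%N -> ~~ (p %| d)%N ->
     a (n %/ d)%N = a (n %/ (p * d))%N %[mod m])%Z ->
  (Aplus a n = Aminus a n %[mod m])%Z.
Proof.
move=> n_gt0 pp pn a_congr.
have mu_p2 d : (d %| n)%N -> (p ^ 2 %| d)%N -> moebius d = 0.
  by move=> dn; apply: moebius_eq0 pp (dvdn_gt0 n_gt0 dn).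
rewrite /Aplus /Aminus big_mkcond [X in (_ = X %[mod _])%Z]big_mkcond /=.
rewrite !(big_divisors_prime_pair _ n_gt0 pp pn) /=; last 2 first.
- by move=> d dn /(mu_p2 d dn)->.
- by move=> d dn /(mu_p2 d dn)->.
rewrite big_seq_cond [X in (_ = X %[mod _])%Z]big_seq_cond.
apply: eqz_mod_prod => d /andP[]; rewrite -dvdn_divisors // => dn npd.
rewrite moebius_primeM ?(dvdn_gt0 n_gt0 dn) // !eqr_oppLR opprK.
have := a_congr d dn npd.
case: (moebius d =P 1) => [->|_]; first by rewrite mulr1 mul1r.
by case: (moebius d =P -1) => // _; rewrite mulr1 mul1r => ->.
Qed.

Section GaussSequence.

Variable a : nat -> int.
Hypothesis gauss_a : is_gauss a.

Lemma gauss_sum_prime_pair n p : (0 < n)%N -> prime p -> (p %| n)%N ->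
  \sum_(d <- divisors n) moebius d * a (n %/ d)%N =
  \sum_(d <- divisors n | ~~ (p %| d)%N)
     moebius d * (a (n %/ d)%N - a (n %/ d %/ p)%N).
Proof.
move=> n_gt0 pp pn; rewrite (big_divisors_prime_pair +%R n_gt0 pp pn); last first.
  by move=> d dn p2d; rewrite (moebius_eq0 pp (dvdn_gt0 n_gt0 dn) p2d) mul0r.
rewrite big_seq_cond [RHS]big_seq_cond; apply: eq_bigr => d /andP[].
rewrite -dvdn_divisors // => dn npd.
by rewrite moebius_primeM ?(dvdn_gt0 n_gt0 dn) // mulnC divnMA mulNr mulrBr.
Qed.

(* Strong induction on [n]: in the paired Gauss sum the term [d = 1] is
   [a n - a (n/p)], and every other term is divisible by [p ^ logn p n] by
   induction at [n/d]. *)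
Lemma gauss_dvdz_sub_div n p : (0 < n)%N -> prime p -> (p %| n)%N ->
  ((p ^ logn p n)%N%:Z %| a n - a (n %/ p)%N)%Z.
Proof.
elim/ltn_ind: n => n IH n_gt0 pp pn.
have := gauss_a n_gt0; rewrite (gauss_sum_prime_pair n_gt0 pp pn) -big_filter.
rewrite (bigD1_seq 1%N) /=; first last.
- by rewrite filter_uniq ?divisors_uniq.
- by rewrite mem_filter divisor1 dvdn1 andbT; apply: contraTneq pp => ->.
rewrite moebius1 mul1r divn1.
have pk_n : ((p ^ logn p n)%N%:Z %| n%:Z)%Z by rewrite dvdzE /= pfactor_dvdn.
move/(dvdz_trans pk_n); rewrite rpredDr // big_seq_cond; apply: rpred_sum => d.
case/andP; rewrite mem_filter -dvdn_divisors // => /andP[npd dn] d_neq1.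
have cpd : coprime p d by rewrite prime_coprime.
have d_gt0 := dvdn_gt0 n_gt0 dn.
apply: dvdz_mull; rewrite -(logn_div_coprime cpd dn); apply: IH => //.
- by rewrite ltn_Pdiv // ltn_neqAle eq_sym d_neq1 d_gt0.
- by rewrite divn_gt0 // dvdn_leq.
- exact: dvdn_div_coprime.
Qed.

End GaussSequence.

Theorem theorem1 (a : nat -> int) : is_gauss a -> is_euler_gauss a.
Proof.
move=> gauss_a n n_gt0; rewrite eqz_mod_dvd dvdzE absz_nat.
apply/dvdn_partP => // p; rewrite mem_primes => /and3P[pp _ pn].
rewrite p_part -[(p ^ _)%N]absz_nat -dvdzE -eqz_mod_dvd; apply/eqP.
apply: (Aplus_Aminus_eqz_mod n_gt0 pp pn) => d dn npd.
have cpd : coprime p d by rewrite prime_coprime.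
have d_gt0 := dvdn_gt0 n_gt0 dn.
have q_gt0 : (0 < n %/ d)%N by rewrite divn_gt0 // dvdn_leq.
apply/eqP; rewrite eqz_mod_dvd -(logn_div_coprime cpd dn) mulnC divnMA.
exact: gauss_dvdz_sub_div q_gt0 pp (dvdn_div_coprime cpd dn pn).
Qed.
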